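(* Let $s\ge 1$, $q=4^{2s}$, and let $\theta$ be the automorphism of $F_q$ given by $\theta(a)=a^{4^s}$. Let $n$ be an even positive integer and suppose $x^n-1=h(x)g(x)$ in $F_q[x;\theta]$, where the degree of $g(x)$ is even. If $h(x)$ is a palindromic polynomial, then $g(x)$ is also a palindromic polynomial.
   Context: $F_q[x;\theta]$ is the skew polynomial ring: polynomials $\sum a_ix^i$ with $a_i\in F_q$, usual addition, and multiplication determined by $xa=\theta(a)x$ for $a\in F_q$. A polynomial $f(x)=a_0+a_1x+\dots+a_tx^t$ of degree $t$ is palindromic if $a_i=a_{t-i}$ for all $i\in\{0,\ldots,t\}$. *)

From HB Require Import structures.
From mathcomp Require Import all_boot all_algebra all_field.
Set Implicit Arguments. Unset Strict Implicit. Unset Printing Implicit Defensive.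
Import GRing.Theory.
Local Open Scope ring_scope.

(* Skew polynomials F[x; theta] are represented by their coefficient
   sequences, stored in {poly F} (so addition, 'X^n, constants, size,
   coefficients are the usual ones).  The skew product is defined by
   x a = theta(a) x, i.e. (a x^i)(b x^j) = a theta^i(b) x^(i+j). *)
Definition skmul (F : ringType) (theta : F -> F) (p q : {poly F}) : {poly F} :=
  \poly_(k < (size p + size q).-1)
     \sum_(i < k.+1) p`_i * iter i theta q`_(k - i).

Definition palindromic (F : ringType) (p : {poly F}) : Prop :=
  forall i : nat, (i <= (size p).-1)%N -> p`_i = p`_((size p).-1 - i).

From HB Require Import structures.
From mathcomp Require Import all_boot all_algebra all_field.
From mathcomp Require Import zify.
Import GRing.Theory.
Set Implicit Arguments.
Unset Strict Implicit.
Unset Printing Implicit Defensive.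
Local Open Scope ring_scope.

(* theta(a) = a^(4^s) is an involution of F_q since q = (4^s)^2, and F_q has
   characteristic 2.  Write p* for the coefficient reversal of p.  If theta is
   an involution and p has even degree t, then (p q)* = p* q*: the term
   a_i theta^i(b_j) moves to index (t - i, m - j), and theta^(t - i) = theta^i.
   Here deg h = n - deg g is even, so h g* = h* g* = (h g)* = (x^n - 1)* = h g,
   the last step because -1 = 1.  Comparing coefficients from the constant
   term up, h(0) != 0 lets us cancel h on the left: g* = g. *)

Lemma iter_involutive (T : Type) (f : T -> T) n :
  involutive f -> iter n f =1 if odd n then f else id.
Proof. by move=> fK x; elim: n => //= n ->; case: (odd n). Qed.

Lemma sum_antidiagonal (V : nmodType) (F : nat -> nat -> V) t m k :
    (forall i j, (t < i)%N || (m < j)%N -> F i j = 0) ->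
  \sum_(i < k.+1) F i (k - i)%N =
  \sum_(i < t.+1) \sum_(j < m.+1 | (i + j == k)%N) F i j.
Proof.
move=> F0.
have inner i : \sum_(j < m.+1 | (i + j == k)%N) F i j =
               if (i <= k)%N then F i (k - i)%N else 0.
  case: leqP => ik; last by rewrite big_pred0 // => j; lia.
  have [km | km] := ltnP (k - i) m.+1.
    by rewrite (big_pred1 (Ordinal km)) // => j; rewrite /= -val_eqE /=; lia.
  rewrite F0 ?km ?orbT // big1 // => j /eqP ij.
  by apply: F0; apply/orP; right; lia.
under [RHS]eq_bigr do rewrite inner.
have [le_k le_t] : (k < (k + t).+1)%N /\ (t < (k + t).+1)%N by lia.
rewrite (big_ord_widen _ (fun i => F i (k - i)%N) le_k).
rewrite (big_ord_widen _ (fun i => if (i <= k)%N then F i (k - i)%N else 0)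
                      le_t).
rewrite big_mkcond [RHS]big_mkcond; apply: eq_bigr => i _.
rewrite !ltnS; case: (leqP i t) => // lt_t_i.
by case: ifP => // _; rewrite F0 ?lt_t_i.
Qed.

Definition revp (R : nzRingType) (t : nat) (p : {poly R}) : {poly R} :=
  \poly_(i < t.+1) p`_(t - i).

Lemma palindromicE (R : nzRingType) (p : {poly R}) :
  palindromic p <-> revp (size p).-1 p = p.
Proof.
split=> [pal | revpK i le_i_t].
  apply/polyP => i; rewrite coef_poly ltnS; case: leqP => [le_i_t | lt_t_i].
    exact/esym/pal.
  by rewrite nth_default // (leq_trans (leqSpred _) lt_t_i).
by rewrite -[in LHS]revpK coef_poly ltnS le_i_t.
Qed.

Lemma revp_Xn_sub1 (R : nzRingType) n :
  2 \in [pchar R] -> revp n ('X^n - 1 : {poly R}) = 'X^n - 1.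
Proof.
move=> pcharR2; apply/polyP => i; rewrite coef_poly !coefB !coefXn !coef1.
case: ltnP => [le_i_n | lt_n_i]; last first.
  have i_gt0 : (0 < i)%N by lia.
  by rewrite !gtn_eqF // subrr.
have -> : (n - i == n)%N = (i == 0)%N by lia.
have -> : (n - i == 0)%N = (i == n) by lia.
by rewrite !(oppr_pchar2 pcharR2) addrC.
Qed.

Section SkewProduct.

Variables (R : nzRingType) (theta : R -> R).
Hypothesis theta0 : theta 0 = 0.

Lemma coef_skmul (p q : {poly R}) k :
  (skmul theta p q)`_k = \sum_(i < k.+1) p`_i * iter i theta q`_(k - i)%N.
Proof.
rewrite coef_poly; case: ltnP => // le_size_k; symmetry; apply: big1 => i _.
have [le_p_i | lt_i_p] := leqP (size p) i; first by rewrite nth_default ?mul0r.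
by rewrite (@nth_default _ _ q) ?iter_fix ?mulr0 //; lia.
Qed.

Lemma coef0_skmul (p q : {poly R}) : (skmul theta p q)`_0 = p`_0 * q`_0.
Proof. by rewrite coef_skmul big_ord1. Qed.

Lemma coef_skmul_bounded t m (p q : {poly R}) k :
    (size p <= t.+1)%N -> (size q <= m.+1)%N ->
  (skmul theta p q)`_k =
  \sum_(i < t.+1) \sum_(j < m.+1 | (i + j == k)%N) p`_i * iter i theta q`_j.
Proof.
move=> sz_p sz_q; rewrite coef_skmul.
apply: (sum_antidiagonal (F := fun i j => p`_i * iter i theta q`_j)).
move=> i j /orP[] ?.
  by rewrite nth_default ?mul0r //; apply: leq_trans sz_p _.
by rewrite (@nth_default _ _ q) ?iter_fix ?mulr0 //; apply: leq_trans sz_q _.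
Qed.

Lemma skmulI (p : {poly R}) : GRing.lreg p`_0 -> injective (skmul theta p).
Proof.
move=> reg_p0 q r /polyP eq_pq_pr; apply/polyP => k; elim/ltn_ind: k => k IH.
have := eq_pq_pr k; rewrite !coef_skmul !big_ord_recl /= !subn0.
rewrite (eq_bigr (fun i : 'I_k => p`_(lift ord0 i) *
                 iter (lift ord0 i) theta r`_(k - lift ord0 i)%N)).
  by move/addIr/reg_p0.
by move=> i _; rewrite IH // /bump /=; have := ltn_ord i; lia.
Qed.

Lemma revp_skmul t m (p q : {poly R}) :
    involutive theta -> ~~ odd t -> (size p <= t.+1)%N -> (size q <= m.+1)%N ->
  revp (t + m) (skmul theta p q) = skmul theta (revp t p) (revp m q).
Proof.
move=> thetaK even_t sz_p sz_q; apply/polyP => k.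
rewrite coef_poly ltnS !(coef_skmul_bounded (t := t) (m := m)) ?size_poly //.
case: leqP => [le_k_tm | lt_tm_k]; last first.
  symmetry; apply: big1 => i _; rewrite big_pred0 // => j.
  by have := ltn_ord i; have := ltn_ord j; lia.
rewrite (reindex_inj rev_ord_inj); apply: eq_bigr => i _.
rewrite (reindex_inj rev_ord_inj); apply: eq_big => [j | j _] /=.
  by have := ltn_ord i; have := ltn_ord j; lia.
rewrite !subSS !coef_poly !ltn_ord !iter_involutive // oddB ?leq_ord //.
by rewrite (negbTE even_t).
Qed.

End SkewProduct.

Lemma size_skmul (R : idomainType) (theta : R -> R) (p q : {poly R}) :
    theta 0 = 0 -> injective theta -> p != 0 -> q != 0 ->
  size (skmul theta p q) = (size p + size q).-1.
Proof.
move=> theta0 theta_inj p_neq0 q_neq0.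
have sz_p : (0 < size p)%N by rewrite size_poly_gt0.
have sz_q : (0 < size q)%N by rewrite size_poly_gt0.
set t := (size p).-1; set m := (size q).-1.
have lead_pq :
    (skmul theta p q)`_(t + m) = lead_coef p * iter t theta (lead_coef q).
  rewrite (coef_skmul_bounded theta0 (t := t) (m := m)) ?leqSpred //.
  rewrite big_ord_recr /=.
  rewrite (big_pred1 ord_max) => [|j]; last by rewrite /= eqn_add2l.
  rewrite big1 ?add0r // => i _; rewrite big_pred0 // => j.
  by have := ltn_ord i; have := ltn_ord j; lia.
have iterI n : injective (iter n theta).
  by elim: n => // n IH x y /= /theta_inj /IH.
rewrite /skmul size_poly_eq //.
have -> : ((size p + size q).-2 = t + m)%N by rewrite /t /m; lia.
rewrite -(coef_skmul theta0) lead_pq mulf_neq0 ?lead_coef_eq0 //.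
by rewrite -[0](iter_fix t theta0) (inj_eq (iterI t)) lead_coef_eq0.
Qed.

Lemma palindromic_skmul_Xn_sub1 (R : idomainType) (theta : R -> R) n
    (h g : {poly R}) :
    theta 0 = 0 -> involutive theta -> 2 \in [pchar R] ->
    (0 < n)%N -> ~~ odd n ->
    skmul theta h g = 'X^n - 1 -> ~~ odd (size g).-1 ->
  palindromic h -> palindromic g.
Proof.
move=> theta0 thetaK pcharR2 n_gt0 even_n hg_eq even_m pal_h.
have h0g0 : h`_0 * g`_0 = -1.
  by rewrite -(coef0_skmul theta0) hg_eq coefB coefXn coef1 eq_sym gtn_eqF ?sub0r.
have /andP[h0 g0] : (h`_0 != 0) && (g`_0 != 0).
  by rewrite -negb_or -mulf_eq0 h0g0 oppr_eq0 oner_eq0.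
have h_gt0 : (0 < size h)%N.
  by rewrite size_poly_gt0; apply: contraNneq h0 => ->; rewrite coef0.
have g_gt0 : (0 < size g)%N.
  by rewrite size_poly_gt0; apply: contraNneq g0 => ->; rewrite coef0.
set t := (size h).-1; set m := (size g).-1 in even_m *.
have tm : (t + m)%N = n.
  have := size_skmul theta0 (can_inj thetaK)
    (gt_size_poly_neq0 h_gt0) (gt_size_poly_neq0 g_gt0).
  rewrite hg_eq -polyC1 size_XnsubC // -(prednK h_gt0) -(prednK g_gt0).
  by rewrite addSn addnS => -[->].
have even_t : ~~ odd t by move: even_n; rewrite -tm oddD (negbTE even_m) addbF.
have hg_rev : skmul theta h (revp m g) = skmul theta h g.
  have := revp_skmul theta0 thetaK even_t
    (leqSpred (size h)) (leqSpred (size g)).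
  by rewrite ((palindromicE h).1 pal_h) tm hg_eq revp_Xn_sub1 // => <-.
exact/palindromicE/(skmulI theta0 (mulfI h0) hg_rev).
Qed.

Theorem theorem3 (s : nat) (F : finFieldType) (n : nat) (h g : {poly F}) :
  (1 <= s)%N ->
  #|F| = (4 ^ (2 * s))%N ->
  (0 < n)%N -> ~~ odd n ->
  skmul (fun a : F => a ^+ (4 ^ s)) h g = 'X^n - 1 ->
  ~~ odd (size g).-1 ->
  palindromic h -> palindromic g.
Proof.
move=> _ cardF; apply: palindromic_skmul_Xn_sub1.
- by rewrite expr0n expn_eq0.
- by move=> a; rewrite -exprM -expnD addnn -mul2n -cardF expf_card.
- by apply: (@card_finPcharP _ _ (4 * s)); rewrite // cardF !expnM.
Qed.
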